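(* Let $G(V,E)$ be a graph with nonnegative edge weights $w$, let $\pi$ be a permutation of $E$ in non-increasing order of weight, and let $G^{(1)},\ldots,G^{(k)}$ be subgraphs of $G$ on vertex set $V$ (e.g. an outcome of a random $k$-clustering). For $i\in[k]$ let $M_i:=\mathsf{Greedy}(G^{(i)},\pi)$ and let $H$ be the graph on $V$ with edge set $\bigcup_{i} M_i$. Fix a maximum weight matching $M^*$ of $G$. Call $e\in M^*$ free for machine $1$ if no endpoint of $e$ is matched by $\mathsf{Greedy}(G^{(1)},\pi^{<e})$, and blocked otherwise; let $F_1$ and $B_1$ be the sets of free and blocked edges of $M^*$ for machine $1$, and let $F'_1:=F_1\cap E(H)$. Then $$\mathrm{opt}(H) \geq \frac12\left(w(F'_1)+w(B_1)\right).$$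
   Context: $\mathrm{opt}(H)$ is the weight of a maximum weight matching of $H$; $w(S)$ is the total weight of an edge set $S$. $\mathsf{Greedy}(G,\pi)$ scans the edges of $G$ in the order $\pi$ (restricted to the edges of $G$) and adds an edge $(u,v)$ iff neither endpoint is already matched. $\pi^{<e}$ is the set of edges preceding $e$ in $\pi$, and $\mathsf{Greedy}(G^{(1)},\pi^{<e})$ means running $\mathsf{Greedy}(G^{(1)},\pi)$ and stopping just before processing $e$. Whether $e$ is free or blocked does not depend on whether $e$ belongs to $G^{(1)}$. *)

From mathcomp Require Import all_boot all_order all_algebra.
Set Implicit Arguments. Unset Strict Implicit. Unset Printing Implicit Defensive.
Import Order.TTheory GRing.Theory Num.Theory.
Local Open Scope ring_scope.

(* Simple graphs on a finite vertex type V: an edge is a 2-element subset of V,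
   a graph (on vertex set V) is given by its edge set. *)
Section Defs.
Variable V : finType.

Definition edge_set (E : {set {set V}}) : bool := [forall e in E, #|e| == 2%N].

Definition matching (M : {set {set V}}) : bool :=
  [forall e in M, #|e| == 2%N] &&
  [forall e in M, forall f in M, (e != f) ==> [disjoint e & f]].

Fixpoint greedy_from (S : {set {set V}}) (s : seq {set V}) (M : {set {set V}})
  : {set {set V}} :=
  match s with
  | [::] => M
  | e :: s' =>
      greedy_from S s'
        (if (e \in S) && [disjoint e & cover M] then e |: M else M)
  end.

Definition Greedy (S : {set {set V}}) (pi : seq {set V}) : {set {set V}} :=
  greedy_from S pi set0.

Definition prefix_before (pi : seq {set V}) (e : {set V}) : seq {set V} :=
  take (index e pi) pi.

Variable R : realFieldType.

Definition wsum (w : {set V} -> R) (S : {set {set V}}) : R := \sum_(e in S) w e.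

(* opt(H): maximum weight of a matching of H (weights nonnegative, so 0 is a
   valid neutral element: the empty matching has weight 0). *)
Definition opt (w : {set V} -> R) (H : {set {set V}}) : R :=
  \big[Num.max/0]_(M : {set {set V}} | (M \subset H) && matching M) wsum w M.

End Defs.

From mathcomp Require Import all_boot all_order all_algebra.
From mathcomp Require Import zify lra.
Import Order.TTheory GRing.Theory Num.Theory.

(* M1 := Greedy(G1, pi) is a matching of H.  A blocked edge e of M* meets an
   edge f of M1 scanned before e, so w e <= w f: charge e to f.  An edge of M1
   meets at most two edges of M*, and at most one blocked edge if it also meets
   an edge of F1'.  Hence, if A is the weight of the edges of M1 avoiding the
   vertices of F1' and C that of the others, w(B1) <= 2A + C.  Both M1, of
   weight A + C, and F1' together with those avoiding edges, of weight
   w(F1') + A, are matchings of H, so 2 opt(H) >= w(F1') + w(B1). *)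

Set Implicit Arguments. Unset Strict Implicit. Unset Printing Implicit Defensive.

Section Charging.
Variables (R : realFieldType) (T : finType).
Local Open Scope ring_scope.

Lemma sum_le_charge (A M : {set T}) (r : rel T) (w : T -> R) (c : T -> nat) :
  {in A, forall e, exists2 f, f \in M & r e f && (w e <= w f)} ->
  {in M, forall f, 0 <= w f} ->
  {in M, forall f, #|[set e in A | r e f]| <= c f}%N ->
  \sum_(e in A) w e <= \sum_(f in M) w f *+ c f.
Proof.
move=> charge w_ge0 c_bound.
pose phi e := odflt e [pick f in M | r e f && (w e <= w f)].
have phiP e : e \in A -> [/\ phi e \in M, r e (phi e) & w e <= w (phi e)].
  case/charge=> f fM ref; rewrite /phi.
  by case: pickP => [g /and3P[]|/(_ f)] //=; rewrite fM ref.
apply: le_trans (_ : \sum_(e in A) w (phi e) <= _).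
  by apply: ler_sum => e /phiP[].
rewrite (partition_big phi [in M]) /=; last by move=> e /phiP[].
apply: ler_sum => f fM.
rewrite (eq_bigr (fun=> w f)) => [|e /andP[_ /eqP->] //].
rewrite sumr_const ler_wpMn2l ?w_ge0 //; apply: leq_trans (c_bound f fM).
by apply/subset_leq_card/subsetP => e /andP[eA /eqP <-]; rewrite inE eA; case/phiP: eA.
Qed.

End Charging.

Section Matchings.
Variable V : finType.
Implicit Types (S M N F B : {set {set V}}) (s : seq {set V}) (e f : {set V}).

Definition touching M f := [set e in M | ~~ [disjoint e & f]].

Definition avoiding M F := [set f in M | [disjoint f & cover F]].

Lemma avoiding_sub M F : avoiding M F \subset M.
Proof. by apply/subsetP => f /setIdP[]. Qed.

Lemma matchingP M :
  reflect ((forall e, e \in M -> #|e| = 2) /\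
           (forall e f, e \in M -> f \in M -> e != f -> [disjoint e & f]))
          (matching M).
Proof.
apply: (iffP andP) => [[/forallP M2 /forallP Mdisj]|[M2 Mdisj]]; split.
- by move=> e eM; move/implyP/(_ eM)/eqP: (M2 e).
- move=> e f eM fM.
  by move/implyP/(_ eM)/forallP/(_ f)/implyP/(_ fM)/implyP: (Mdisj e).
- by apply/forallP => e; apply/implyP => /M2 ->.
- apply/forallP => e; apply/implyP => eM; apply/forallP => f; apply/implyP => fM.
  exact/implyP/Mdisj.
Qed.

Lemma matchingS M N : M \subset N -> matching N -> matching M.
Proof.
move=> /subsetP sMN /matchingP[N2 Ndisj]; apply/matchingP; split.
  by move=> e /sMN; apply: N2.
by move=> e f /sMN eN /sMN fN; apply: Ndisj.
Qed.

Lemma subset_cover M f : f \in M -> f \subset cover M.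
Proof. exact: bigcup_sup. Qed.

Lemma card_touching M f : matching M -> #|touching M f| <= #|f|.
Proof.
case/matchingP=> _ Mdisj.
pose g e := [pick v in e :&: f].
have gP e : e \in touching M f -> exists2 v, g e = Some v & v \in e :&: f.
  rewrite inE => /andP[_ /pred0Pn[v /andP[ve vf]]].
  rewrite /g; case: pickP => [u uef|/(_ v)]; first by exists u.
  by rewrite inE (ve : v \in e) (vf : v \in f).
have g_inj : {in touching M f &, injective g}.
  move=> e1 e2 e1T e2T; have [v -> /setIP[ve1 _]] := gP _ e1T.
  have [u -> /setIP[ue2 _]] := gP _ e2T; case=> vu; subst u.
  apply: contraTeq isT => ne12; move: e1T e2T; rewrite !inE => /andP[e1M _] /andP[e2M _].
  by rewrite (disjointFr (Mdisj _ _ e1M e2M ne12) ve1) in ue2.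
rewrite -(card_in_imset g_inj) -(card_imset f (@Some_inj _)).
apply/subset_leq_card/subsetP => _ /imsetP[e eT ->].
by have [v -> /setIP[_ vf]] := gP _ eT; apply: imset_f.
Qed.

Lemma subset_greedy_from S s M : M \subset greedy_from S s M.
Proof.
elim: s M => [|e s IHs] M /=; first exact: subxx.
by apply: subset_trans (IHs _); case: ifP => _; [apply: subsetUr | apply: subxx].
Qed.

Lemma mem_greedy_from S s M f :
  f \in greedy_from S s M -> f \in M \/ f \in S /\ f \in s.
Proof.
elim: s M => [|e s IHs] M /=; first by left.
case/IHs=> [|[fS fs]]; last by right; rewrite inE fs orbT.
case: ifP => [/andP[eS _]|_]; last by left.
by case/setU1P=> [->|]; [right; rewrite inE eqxx | left].
Qed.

Lemma greedy_from_cat S s1 s2 M :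
  greedy_from S (s1 ++ s2) M = greedy_from S s2 (greedy_from S s1 M).
Proof. by elim: s1 M => [|e s1 IHs] M /=. Qed.

Lemma Greedy_sub S s : Greedy S s \subset S.
Proof. by apply/subsetP => f /mem_greedy_from[|[]//]; rewrite inE. Qed.

Lemma matching_greedy_from S s M :
  {in S, forall e, #|e| = 2} -> matching M -> matching (greedy_from S s M).
Proof.
move=> S2; elim: s M => [|e s IHs] M //= mM; apply: IHs.
case: ifP => // /andP[eS eM]; case/matchingP: mM => M2 Mdisj.
apply/matchingP; split=> [f|f g]; first by case/setU1P=> [->|/M2]; [apply: S2|].
case/setU1P=> [->|fM] /setU1P[->|gM]; rewrite ?eqxx //.
- by move=> _; apply: disjointWr (subset_cover gM) eM.
- by move=> _; rewrite disjoint_sym; apply: disjointWr (subset_cover fM) eM.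
- exact: Mdisj.
Qed.

Lemma matching_Greedy S s : {in S, forall e, #|e| = 2} -> matching (Greedy S s).
Proof.
move=> S2; apply: matching_greedy_from => //.
by apply/matchingP; split=> [e|e f]; rewrite inE.
Qed.

(* The blocking edge was scanned before [e], so it precedes [e] in [pi]. *)
Lemma Greedy_blocker (r : rel {set V}) S pi e :
  transitive r -> sorted r pi -> e \in pi ->
  ~~ [disjoint e & cover (Greedy S (prefix_before pi e))] ->
  exists2 f, f \in Greedy S pi & ~~ [disjoint e & f] && r f e.
Proof.
move=> r_tr r_sorted epi /pred0Pn[x /andP[xe /bigcupP[f fG xf]]].
exists f.
  rewrite /Greedy -(cat_take_drop (index e pi) pi) greedy_from_cat.
  exact: subsetP (subset_greedy_from _ _ _) f fG.
have [|[_ fpre]] := mem_greedy_from fG; first by rewrite inE.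
rewrite /prefix_before in fpre.
apply/andP; split; first by apply/pred0Pn; exists x; apply/andP.
apply: (sorted_ltn_index r_tr r_sorted) => //; first exact: mem_take fpre.
exact: index_ltn fpre.
Qed.

Lemma card_touching_disjoint M B F f :
  matching M -> B \subset M -> F \subset M -> [disjoint B & F] -> #|f| = 2 ->
  #|touching B f| <= (if [disjoint f & cover F] then 2 else 1).
Proof.
move=> mM /subsetP BM /subsetP FM dBF f2.
have tBF : #|touching B f| + #|touching F f| <= 2.
  have BFI : touching B f :&: touching F f = set0.
    by apply/disjoint_setI0/(disjointW _ _ dBF); apply/subsetP => e; rewrite inE => /andP[].
  rewrite -cardsUI BFI cards0 addn0 -f2; apply: leq_trans (card_touching f mM).
  apply/subset_leq_card/subsetP => e; rewrite !inE.
  by case/orP=> /andP[eBF ->]; rewrite andbT; [apply: BM | apply: FM].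
case: ifP => [_|/negbT/pred0Pn[x /andP[xf /bigcupP[e0 e0F xe0]]]]; first lia.
suff : 0 < #|touching F f| by lia.
apply/card_gt0P; exists e0; rewrite inE e0F; apply/pred0Pn; exists x; exact/andP.
Qed.

Lemma matching_setU_avoiding M F :
  matching F -> matching M -> matching (F :|: avoiding M F).
Proof.
case/matchingP=> F2 Fdisj /matchingP[M2 Mdisj]; apply/matchingP; split.
  by move=> e /setUP[/F2 | /setIdP[/M2]].
move=> e f /setUP[eF | /setIdP[eM deF]] /setUP[fF | /setIdP[fM dfF]].
- exact: Fdisj.
- by move=> _; rewrite disjoint_sym; apply: disjointWr (subset_cover eF) dfF.
- by move=> _; apply: disjointWr (subset_cover fF) deF.
- exact: Mdisj.
Qed.

End Matchings.

Local Open Scope ring_scope.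

Section Weights.
Variables (V : finType) (R : realFieldType) (w : {set V} -> R).
Implicit Types (H M F B : {set {set V}}) (e f : {set V}).

Lemma wsum_ge_opt H M : M \subset H -> matching M -> wsum w M <= opt w H.
Proof. by move=> MH mM; apply: le_bigmax_cond; rewrite MH mM. Qed.

Lemma wsum_avoiding M F :
  wsum w M = wsum w (avoiding M F) + wsum w (M :\: avoiding M F).
Proof.
by rewrite /wsum (big_setID (avoiding M F)) (setIidPr (avoiding_sub M F)).
Qed.

Lemma wsum_setU_avoiding M F :
  matching M -> wsum w (F :|: avoiding M F) = wsum w F + wsum w (avoiding M F).
Proof.
case/matchingP=> M2 _; rewrite /wsum -bigU /=; last first.
  apply/pred0P => f /=; apply/negP => /andP[fF]; rewrite inE => /andP[/M2 f2 dfF].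
  have /card_gt0P[x xf] : (0 < #|f|)%N by rewrite f2.
  by move: (subsetP (subset_cover fF) x xf); rewrite (disjointFr dfF xf).
by apply: eq_bigl => f; rewrite inE.
Qed.

Lemma wsum_blocked_le Ms M F B :
  matching Ms -> matching M -> {in M, forall f, 0 <= w f} ->
  F \subset Ms -> B \subset Ms -> [disjoint B & F] ->
  {in B, forall e, exists2 f, f \in M & ~~ [disjoint e & f] && (w e <= w f)} ->
  wsum w B <= wsum w (avoiding M F) *+ 2 + wsum w (M :\: avoiding M F).
Proof.
move=> mMs mM w_ge0 FMs BMs dBF blocked; case/matchingP: (mM) => M2 _.
pose c f := (if [disjoint f & cover F] then 2 else 1)%N.
rewrite /wsum; apply: le_trans (sum_le_charge (c := c) blocked w_ge0 _) _.
  by move=> f /M2; apply: card_touching_disjoint mMs BMs FMs dBF.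
rewrite (big_setID (avoiding M F)) (setIidPr (avoiding_sub M F)) -sumrMnl.
apply: lerD; apply: ler_sum => f.
  by case/setIdP=> _ dfF; rewrite /c dfF.
by case/setDP=> fM; rewrite inE fM /c /= => /negbTE->.
Qed.

Lemma wsum_blocked_free_le Ms M F B :
  matching Ms -> matching M -> {in M, forall f, 0 <= w f} ->
  F \subset Ms -> B \subset Ms -> [disjoint B & F] ->
  {in B, forall e, exists2 f, f \in M & ~~ [disjoint e & f] && (w e <= w f)} ->
  wsum w F + wsum w B <= wsum w M + wsum w (F :|: avoiding M F).
Proof.
move=> mMs mM w_ge0 FMs BMs dBF blocked.
have := wsum_blocked_le mMs mM w_ge0 FMs BMs dBF blocked.
rewrite (wsum_avoiding M F) wsum_setU_avoiding // mulr2n; lra.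
Qed.
End Weights.

Theorem lemma3p3 (R : realFieldType) (V : finType) (E : {set {set V}})
    (w : {set V} -> R) (pi : seq {set V}) (k : nat)
    (Gs : 'I_k.+1 -> {set {set V}}) (Mstar : {set {set V}}) :
  edge_set E ->
  (forall e, e \in E -> 0 <= w e) ->
  perm_eq pi (enum E) ->
  sorted (fun e f => w f <= w e) pi ->
  (forall i, Gs i \subset E) ->
  Mstar \subset E -> matching Mstar ->
  (forall M : {set {set V}}, M \subset E -> matching M -> wsum w M <= wsum w Mstar) ->
  let H := \bigcup_(i < k.+1) Greedy (Gs i) pi in
  let F1 := [set e in Mstar |
              [disjoint e & cover (Greedy (Gs ord0) (prefix_before pi e))]] in
  let B1 := Mstar :\: F1 in
  let F1' := F1 :&: H in
  opt w H >= (wsum w F1' + wsum w B1) / 2.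
Proof.
(* The bound holds for every matching [Mstar]. *)
move=> /forall_inP E2 w_ge0 pi_E pi_sorted Gs_E Mstar_E mMstar _ /=.
set H := \bigcup_(i < k.+1) _; set F1 := [set e in Mstar | _].
set B1 := Mstar :\: F1; set F1' := F1 :&: H.
set M1 := Greedy (Gs ord0) pi.
have M1_E : M1 \subset E := subset_trans (Greedy_sub _ _) (Gs_E ord0).
have mM1 : matching M1.
  by apply: matching_Greedy => e /(subsetP (Gs_E ord0)) /E2/eqP.
have M1_H : M1 \subset H := bigcup_sup ord0 isT.
have F1'_Mstar : F1' \subset Mstar by apply/subsetP => e /setIP[/setIdP[]].
have B1_Mstar : B1 \subset Mstar := subsetDl _ _.
have dB1F1' : [disjoint B1 & F1'].
  by apply: disjointW (subxx _) (subsetIl _ _) _; rewrite /B1 disjoints_subset setDE subsetIr.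
have B1_blocked : {in B1, forall e : {set V},
    exists2 f, f \in M1 & ~~ [disjoint e & f] && (w e <= w f)}.
  move=> e /setDP[eMstar]; rewrite inE eMstar /=.
  apply: Greedy_blocker pi_sorted _ => [y x z /= wyx wzy|].
    exact: le_trans wzy wyx.
  by rewrite (perm_mem pi_E) mem_enum (subsetP Mstar_E).
have M1_w : {in M1, forall f, 0 <= w f} by move=> f /(subsetP M1_E) /w_ge0.
have N_H : F1' :|: avoiding M1 F1' \subset H.
  by rewrite subUset subsetIr (subset_trans (avoiding_sub _ _) M1_H).
have := wsum_blocked_free_le mMstar mM1 M1_w F1'_Mstar B1_Mstar dB1F1' B1_blocked.
have := wsum_ge_opt w M1_H mM1.
have := wsum_ge_opt w N_H (matching_setU_avoiding (matchingS F1'_Mstar mMstar) mM1).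
lra.
Qed.
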